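(* Let $\mathcal{A}$ and $\mathcal{U}$ be Banach algebras, let $\theta$ be a nonzero character on $\mathcal{A}$, and let $\mathcal{X}$ be a Banach $(\mathcal{A}\times_{\theta}\mathcal{U})$-bimodule, regarded also as a Banach $\mathcal{A}$-bimodule and as a Banach $\mathcal{U}$-bimodule via the induced actions described in the context. Let $D:\mathcal{A}\times_{\theta}\mathcal{U}\to\mathcal{X}$ be a linear mapping. Then the following are equivalent: (i) $D$ is a derivation; (ii) there are linear mappings $\delta_1:\mathcal{A}\to\mathcal{X}$ and $\delta_2:\mathcal{U}\to\mathcal{X}$ with $D((a,u))=\delta_1(a)+\delta_2(u)$ for all $a\in\mathcal{A},u\in\mathcal{U}$, such that $\delta_1$ and $\delta_2$ are derivations and \[a\delta_2(u)+\delta_1(a)u=\theta(a)\delta_2(u)=\delta_2(u)a+u\delta_1(a)\qquad(a\in\mathcal{A},\,u\in\mathcal{U}).\]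
   Context: For Banach algebras $\mathcal{A},\mathcal{U}$ and a nonzero character (nonzero multiplicative linear functional) $\theta$ on $\mathcal{A}$, the Lau product $\mathcal{A}\times_{\theta}\mathcal{U}$ is the Banach space $\mathcal{A}\times\mathcal{U}$ with norm $\|(a,u)\|=\|a\|+\|u\|$ and multiplication $(a,u)(a',u')=(aa',\theta(a)u'+\theta(a')u+uu')$. Given a Banach $(\mathcal{A}\times_{\theta}\mathcal{U})$-bimodule $\mathcal{X}$, it is a Banach $\mathcal{A}$-bimodule via $a x=(a,0)x$, $xa=x(a,0)$, and a Banach $\mathcal{U}$-bimodule via $ux=(0,u)x$, $xu=x(0,u)$. A derivation from a Banach algebra $\mathcal{B}$ into a Banach $\mathcal{B}$-bimodule $\mathcal{Y}$ is a linear map $\delta$ with $\delta(bc)=b\delta(c)+\delta(b)c$. *)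

From HB Require Import structures.
From mathcomp Require Import all_boot all_order all_algebra.
From mathcomp Require Import all_classical all_reals all_analysis.
Set Implicit Arguments. Unset Strict Implicit. Unset Printing Implicit Defensive.
Import Order.TTheory GRing.Theory Num.Theory.
Import numFieldNormedType.Exports.
Local Open Scope ring_scope.

Definition lin_map (K : numFieldType) (V W : lmodType K) (f : V -> W) : Prop :=
  forall (k : K) (x y : V), f (k *: x + y) = k *: f x + f y.

Definition bilinear_op (K : numFieldType) (V W Z : lmodType K)
  (m : V -> W -> Z) : Prop :=
  (forall y, lin_map (fun x => m x y)) /\ (forall x, lin_map (m x)).

Definition banach_algebra (K : numFieldType) (V : completeNormedModType K)
  (mul : V -> V -> V) : Prop :=
  [/\ bilinear_op mul,
      (forall x y z, mul x (mul y z) = mul (mul x y) z)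
    & (forall x y, `|mul x y| <= `|x| * `|y|)].

Definition nonzero_character (K : numFieldType) (V : completeNormedModType K)
  (mul : V -> V -> V) (theta : V -> K) : Prop :=
  [/\ lin_map (theta : V -> K^o),
      (forall x y, theta (mul x y) = theta x * theta y)
    & exists x, theta x != 0].

Definition lau_mul (K : numFieldType) (A U : completeNormedModType K)
  (mulA : A -> A -> A) (mulU : U -> U -> U) (theta : A -> K)
  (p q : A * U) : A * U :=
  (mulA p.1 q.1, theta p.1 *: q.2 + theta q.1 *: p.2 + mulU p.2 q.2).

Definition lau_norm (K : numFieldType) (A U : completeNormedModType K)
  (p : A * U) : K := `|p.1| + `|p.2|.

Definition banach_bimodule (K : numFieldType) (T : lmodType K)
  (mulB : T -> T -> T) (nB : T -> K) (X : completeNormedModType K)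
  (l : T -> X -> X) (r : X -> T -> X) : Prop :=
  [/\ bilinear_op l /\ bilinear_op r,
      (forall b c x, l (mulB b c) x = l b (l c x)),
      (forall b c x, r x (mulB b c) = r (r x b) c),
      (forall b c x, l b (r x c) = r (l b x) c)
    & exists M : K, 0 <= M /\ forall b x,
        `|l b x| <= M * nB b * `|x| /\ `|r x b| <= M * nB b * `|x| ].

Definition derivation (K : numFieldType) (T : lmodType K) (mulB : T -> T -> T)
  (X : lmodType K) (l : T -> X -> X) (r : X -> T -> X) (d : T -> X) : Prop :=
  lin_map d /\ forall b c, d (mulB b c) = l b (d c) + r (d b) c.

(** The Lau product decomposes as the direct sum of the embedded copies
    (a, 0) and (0, u), and its multiplication restricted to these pieces is
    (a, 0)(b, 0) = (ab, 0), (0, u)(0, v) = (0, uv) and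
    (a, 0)(0, u) = (0, u)(a, 0) = (0, theta(a) u).  A linear D is therefore a
    derivation iff it is one on each piece and the Leibniz rule holds on the
    mixed products; the latter are exactly the two compatibility identities. *)

From HB Require Import structures.
From mathcomp Require Import all_boot all_order all_algebra.
From mathcomp Require Import all_classical all_reals all_analysis.
Import Order.TTheory GRing.Theory Num.Theory.
Import numFieldNormedType.Exports.
Local Open Scope ring_scope.
Set Implicit Arguments. Unset Strict Implicit.

Section LinMap.
Variables (K : numFieldType) (V W : lmodType K) (f : V -> W).
Hypothesis f_lin : lin_map f.

Lemma lin_mapD x y : f (x + y) = f x + f y.
Proof. by have := f_lin 1 x y; rewrite !scale1r. Qed.

Lemma lin_map0 : f 0 = 0.
Proof. by have := f_lin (-1) 0 0; rewrite scaler0 addr0 scaleN1r addNr. Qed.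

Lemma lin_mapZ k x : f (k *: x) = k *: f x.
Proof. by have := f_lin k x 0; rewrite !addr0 lin_map0 addr0. Qed.

End LinMap.

Section Bilinear.
Variables (K : numFieldType) (V W Z : lmodType K) (m : V -> W -> Z).
Hypothesis m_bilin : bilinear_op m.

Lemma bilinear_op0l y : m 0 y = 0.
Proof. exact: lin_map0 (m_bilin.1 y). Qed.

Lemma bilinear_op0r x : m x 0 = 0.
Proof. exact: lin_map0 (m_bilin.2 x). Qed.

Lemma bilinear_opDl x x' y : m (x + x') y = m x y + m x' y.
Proof. exact: (lin_mapD (m_bilin.1 y) x x'). Qed.

Lemma bilinear_opDr x y y' : m x (y + y') = m x y + m x y'.
Proof. exact: (lin_mapD (m_bilin.2 x) y y'). Qed.

End Bilinear.

Section LauDerivation.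
Variables (K : numFieldType) (A U X : completeNormedModType K).
Variables (mulA : A -> A -> A) (mulU : U -> U -> U) (theta : A -> K).
Variables (l : A * U -> X -> X) (r : X -> A * U -> X).
Hypotheses (mulA_bilin : bilinear_op mulA) (mulU_bilin : bilinear_op mulU).
Hypothesis theta_lin : lin_map (theta : A -> K^o).
Hypotheses (l_bilin : bilinear_op l) (r_bilin : bilinear_op r).

Local Notation lau := (lau_mul mulA mulU theta).

Definition lau_compatible (d1 : A -> X) (d2 : U -> X) : Prop :=
  forall a u,
    l (a, 0) (d2 u) + r (d1 a) (0, u) = theta a *: d2 u /\
    theta a *: d2 u = r (d2 u) (a, 0) + l (0, u) (d1 a).

Lemma pair_split (a : A) (u : U) : (a, u) = (a, 0) + (0, u).
Proof. by rewrite -[RHS]/(a + 0, 0 + u) addr0 add0r. Qed.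

Lemma theta0 : theta 0 = 0.
Proof. exact: lin_map0 theta_lin. Qed.

Lemma lau_mul_inl a b : lau (a, 0) (b, 0) = (mulA a b, 0).
Proof. by rewrite /lau_mul /= !scaler0 (bilinear_op0l mulU_bilin) !addr0. Qed.

Lemma lau_mul_inr u v : lau (0, u) (0, v) = (0, mulU u v).
Proof. by rewrite /lau_mul /= theta0 !scale0r !add0r (bilinear_op0l mulA_bilin). Qed.

Lemma lau_mul_inl_inr a u : lau (a, 0) (0, u) = (0, theta a *: u).
Proof.
by rewrite /lau_mul /= theta0 scale0r (bilinear_op0r mulA_bilin)
  (bilinear_op0l mulU_bilin) !addr0.
Qed.

Lemma lau_mul_inr_inl a u : lau (0, u) (a, 0) = (0, theta a *: u).
Proof.
by rewrite /lau_mul /= theta0 scale0r (bilinear_op0l mulA_bilin)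
  (bilinear_op0r mulU_bilin) addr0 add0r.
Qed.

Section Restriction.
Variable D : A * U -> X.
Hypotheses (D_lin : lin_map D) (D_der : derivation lau l r D).

Lemma lin_map_inl : lin_map (fun a => D (a, 0)).
Proof.
move=> k a b; rewrite -D_lin; congr D.
by rewrite -[RHS]/(k *: a + b, k *: 0 + 0) scaler0 addr0.
Qed.

Lemma lin_map_inr : lin_map (fun u => D (0, u)).
Proof.
move=> k u v; rewrite -D_lin; congr D.
by rewrite -[RHS]/(k *: 0 + 0, k *: u + v) scaler0 addr0.
Qed.

Lemma lin_map_pair a u : D (a, u) = D (a, 0) + D (0, u).
Proof. by rewrite -(lin_mapD D_lin) -pair_split. Qed.

Lemma derivation_inl :
  derivation mulA (fun a x => l (a, 0) x) (fun x a => r x (a, 0))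
    (fun a => D (a, 0)).
Proof. by split=> [|a b]; [exact: lin_map_inl | rewrite -lau_mul_inl D_der.2]. Qed.

Lemma derivation_inr :
  derivation mulU (fun u x => l (0, u) x) (fun x u => r x (0, u))
    (fun u => D (0, u)).
Proof. by split=> [|u v]; [exact: lin_map_inr | rewrite -lau_mul_inr D_der.2]. Qed.

Lemma derivation_compatible :
  lau_compatible (fun a => D (a, 0)) (fun u => D (0, u)).
Proof.
move=> a u; rewrite -(lin_mapZ lin_map_inr); split.
- by rewrite -lau_mul_inl_inr D_der.2.
- by rewrite -lau_mul_inr_inl D_der.2 addrC.
Qed.

End Restriction.

Lemma derivation_lau_sum (d1 : A -> X) (d2 : U -> X) :
  derivation mulA (fun a x => l (a, 0) x) (fun x a => r x (a, 0)) d1 ->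
  derivation mulU (fun u x => l (0, u) x) (fun x u => r x (0, u)) d2 ->
  lau_compatible d1 d2 ->
  forall p q, d1 (lau p q).1 + d2 (lau p q).2 =
              l p (d1 q.1 + d2 q.2) + r (d1 p.1 + d2 p.2) q.
Proof.
move=> [d1_lin d1_der] [d2_lin d2_der] d_comp [a u] [b v] /=.
have [ad2v_d1av _] := d_comp a v.
have [_ d2ub_ud1b] := d_comp b u.
rewrite !(lin_mapD d2_lin) !(lin_mapZ d2_lin) d1_der d2_der.
rewrite (pair_split a u) (pair_split b v).
rewrite !(bilinear_opDl l_bilin) !(bilinear_opDr l_bilin).
rewrite !(bilinear_opDl r_bilin) !(bilinear_opDr r_bilin) -ad2v_d1av d2ub_ud1b.
by rewrite !addrA [LHS](ACl (1*3*6*7*2*4*5*8)).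
Qed.

End LauDerivation.

Theorem theorem2p1 (K : numFieldType) (A U X : completeNormedModType K)
  (mulA : A -> A -> A) (mulU : U -> U -> U) (theta : A -> K)
  (l : A * U -> X -> X) (r : X -> A * U -> X) (D : A * U -> X) :
  banach_algebra mulA -> banach_algebra mulU ->
  nonzero_character mulA theta ->
  banach_bimodule (lau_mul mulA mulU theta) (@lau_norm K A U) l r ->
  lin_map D ->
  (derivation (lau_mul mulA mulU theta) l r D <->
   exists (d1 : A -> X) (d2 : U -> X),
     [/\ lin_map d1 /\ lin_map d2,
         (forall a u, D (a, u) = d1 a + d2 u),
         derivation mulA (fun a x => l (a, 0) x) (fun x a => r x (a, 0)) d1,
         derivation mulU (fun u x => l (0, u) x) (fun x u => r x (0, u)) d2
       & forall a u,
           l (a, 0) (d2 u) + r (d1 a) (0, u) = theta a *: d2 u /\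
           theta a *: d2 u = r (d2 u) (a, 0) + l (0, u) (d1 a)]).
Proof.
move=> [mulA_bilin _ _] [mulU_bilin _ _] [theta_lin _ _] [[l_bilin r_bilin] _ _ _ _] D_lin.
split=> [D_der | [d1 [d2 [_ D_pair d1_der d2_der d_comp]]]].
- exists (fun a => D (a, 0)), (fun u => D (0, u)); split.
  + exact: conj (lin_map_inl D_lin) (lin_map_inr D_lin).
  + exact: lin_map_pair.
  + exact (derivation_inl mulU_bilin D_lin D_der).
  + exact (derivation_inr mulA_bilin theta_lin D_lin D_der).
  + exact (derivation_compatible mulA_bilin mulU_bilin theta_lin D_lin D_der).
- have D_fst_snd p : D p = d1 p.1 + d2 p.2 by case: p; exact: D_pair.
  split=> // p q; rewrite !D_fst_snd.
  exact (derivation_lau_sum l_bilin r_bilin d1_der d2_der d_comp p q).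
Qed.
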